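(* Let $\mathcal{N}=\mathcal{N}_s\cup\mathcal{N}_b$ be a finite set of prosumers, partitioned into disjoint sets of sellers $\mathcal{N}_s$ and buyers $\mathcal{N}_b$. Each seller $n\in\mathcal{N}_s$ has a surplus energy $E_{n,\text{sur}}\ge 0$ and each buyer $m\in\mathcal{N}_b$ has a deficit energy $E_{m,\text{def}}\ge 0$. Let $0\le p_{s,g}<p_{b,g}$ be the grid's selling (feed-in) price and buying price per unit of energy. For a coalition $\mathcal{S}\subseteq\mathcal{N}$ put $$z(\mathcal{S})=\sum_{n\in\mathcal{S}\cap\mathcal{N}_s}E_{n,\text{sur}}-\sum_{m\in\mathcal{S}\cap\mathcal{N}_b}E_{m,\text{def}},\qquad \nu(\mathcal{S})=p_{s,g}\max\bigl(0,z(\mathcal{S})\bigr)-p_{b,g}\max\bigl(0,-z(\mathcal{S})\bigr).$$ Then $\nu$ is superadditive: for any two disjoint subsets $\mathcal{N}_a,\mathcal{N}_c\subseteq\mathcal{N}$, $$\nu(\mathcal{N}_a\cup\mathcal{N}_c)\ge\nu(\mathcal{N}_a)+\nu(\mathcal{N}_c).$$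
   Context: This is the value function of a canonical coalition game with transferable utility $\Gamma=\{\mathcal{N},\nu\}$ modelling peer-to-peer energy trading: within a coalition, sellers' surplus first covers buyers' deficits, any remaining surplus is sold to the grid at price $p_{s,g}$, and any remaining deficit is bought from the grid at price $p_{b,g}$. Here $E_{n,\text{sur}}=E_{n,\text{pv}}-\min(E_{n,d},E_{n,\text{pv}})$ and $E_{n,\text{def}}=E_{n,d}-\min(E_{n,d},E_{n,\text{pv}})$, where $E_{n,\text{pv}}$ is the prosumer's solar generation and $E_{n,d}$ its demand. *)

From mathcomp Require Import all_boot all_order all_algebra.
Set Implicit Arguments. Unset Strict Implicit. Unset Printing Implicit Defensive.
Import Order.TTheory GRing.Theory Num.Theory.
Local Open Scope ring_scope.

Definition net_energy (R : realFieldType) (T : finType) (Ns Nb : {set T})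
  (Esur Edef : T -> R) (S : {set T}) : R :=
  \sum_(n in S :&: Ns) Esur n - \sum_(m in S :&: Nb) Edef m.

Definition coal_value (R : realFieldType) (T : finType) (Ns Nb : {set T})
  (Esur Edef : T -> R) (psg pbg : R) (S : {set T}) : R :=
  let z := net_energy Ns Nb Esur Edef S in
  psg * Num.max 0 z - pbg * Num.max 0 (- z).

(** The value of a coalition depends only on its net energy [z], through
    [f z = psg * max(0, z) - pbg * max(0, -z)].  Because [psg <= pbg], this is
    [f z = min (psg * z) (pbg * z)], a minimum of linear maps, hence
    superadditive; and the net energy is additive over disjoint coalitions. *)

From mathcomp Require Import all_boot all_order all_algebra.
Import Order.TTheory GRing.Theory Num.Theory.
Local Open Scope ring_scope.

Lemma net_energyU (R : realFieldType) (T : finType) (Ns Nb : {set T})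
    (Esur Edef : T -> R) (A B : {set T}) :
  [disjoint A & B] ->
  net_energy Ns Nb Esur Edef (A :|: B) =
  net_energy Ns Nb Esur Edef A + net_energy Ns Nb Esur Edef B.
Proof.
move=> dAB; rewrite /net_energy !setIUl.
have sumIU X (F : T -> R) : \sum_(i in A :&: X :|: B :&: X) F i =
    \sum_(i in A :&: X) F i + \sum_(i in B :&: X) F i.
  rewrite -bigU; last first.
    exact: disjointWl (subsetIl _ _) (disjointWr (subsetIl _ _) dAB).
  by apply: eq_bigl => i; rewrite !inE.
by rewrite !sumIU opprD addrACA.
Qed.

Lemma two_price_min (R : realDomainType) (p q z : R) : p <= q ->
  p * Num.max 0 z - q * Num.max 0 (- z) = Num.min (p * z) (q * z).
Proof.
move=> lepq; have [z_ge0 | z_lt0] := ger0P z.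
- have nz_le0 : - z <= 0 by rewrite oppr_le0.
  rewrite (max_l nz_le0) (min_l (ler_wpM2r z_ge0 lepq)).
  by rewrite mulr0 subr0.
- have z_le0 := ltW z_lt0; have nz_ge0 : 0 <= - z by rewrite oppr_ge0.
  rewrite (max_r nz_ge0) (min_r (ler_wnM2r z_le0 lepq)).
  by rewrite mulr0 sub0r mulrN opprK.
Qed.

Lemma min_mulr_superadditive (R : realDomainType) (p q a b : R) :
  Num.min (p * a) (q * a) + Num.min (p * b) (q * b) <=
  Num.min (p * (a + b)) (q * (a + b)).
Proof.
by rewrite le_min !mulrDr; apply/andP; split; apply: lerD;
  rewrite ge_min lexx ?orbT.
Qed.

Theorem theorem1 (R : realFieldType) (T : finType) (Ns Nb : {set T})
  (Esur Edef : T -> R) (psg pbg : R)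
  (hpart : Ns :|: Nb = [set: T]) (hdisj : [disjoint Ns & Nb])
  (hsur : forall n, n \in Ns -> 0 <= Esur n)
  (hdef : forall m, m \in Nb -> 0 <= Edef m)
  (hps : 0 <= psg) (hpsb : psg < pbg)
  (Na Nc : {set T}) (hNaNc : [disjoint Na & Nc]) :
  coal_value Ns Nb Esur Edef psg pbg (Na :|: Nc) >=
  coal_value Ns Nb Esur Edef psg pbg Na + coal_value Ns Nb Esur Edef psg pbg Nc.
Proof.
have lepq := ltW hpsb.
rewrite /coal_value net_energyU // !two_price_min //.
exact: min_mulr_superadditive.
Qed.
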